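(* Let $\alpha^\star>0$ and let $\theta:(0,\infty)\to\mathbb{R}$ be a function. For $\Lambda\ge 0$, $m>0$ and $\Delta t>0$ define, for $x>0$, $$A(x)=\cos(\theta(x))-\frac{\Delta t^2(\Lambda/m)}{2}\,\frac{\sin(\theta(x))}{x}.$$ Suppose that $0<\theta(x)<2\arctan(2x/\alpha^\star)$ for all $x>0$. Then for all $\Lambda\ge 0$, $m>0$ and $\Delta t>0$ satisfying $\Delta t^2\Lambda/m<\alpha^\star$, we have $|A(x)|<1$ for all $x>0$.
   Context: $\theta$ is the angle function parametrizing an approximate free ring-polymer update; $\Lambda$ is the curvature of a harmonic external potential $V(q)=(\Lambda/2)q^2$, $m$ a mass and $\Delta t$ a time-step. *)

From Stdlib Require Import Reals Lra.
Open Scope R_scope.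

Definition A_fun (theta : R -> R) (Lambda m dt x : R) : R :=
  cos (theta x) - (dt ^ 2 * (Lambda / m)) / 2 * (sin (theta x) / x).

(* Put theta x = 2u and c = Δt²(Λ/m)/(2x) >= 0, so that A(x) = cos 2u - c sin 2u with
   0 < u < atan (2x/α⋆) < π/2.  Then A(x) < 1 because cos 2u < 1 and sin 2u > 0, while
   A(x) + 1 = 2 cos u (cos u - c sin u) > 0 as soon as c tan u < 1; and indeed
   c tan u < c (2x/α⋆) = Δt²Λ/(m α⋆) < 1. *)
From Stdlib Require Import Reals Lra.
Open Scope R_scope.

Lemma tan_lt_of_lt_atan (u y : R) : - PI / 2 < u -> u < atan y -> tan u < y.
Proof.
  intros Hu Huy.
  rewrite <- (tan_atan y).
  apply tan_increasing; [exact Hu | exact Huy | apply atan_bound].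
Qed.

Lemma Rabs_cos_double_sub_mul_sin_double_lt_1 (c u : R) :
  0 <= c -> 0 < u < PI / 2 -> c * tan u < 1 ->
  Rabs (cos (2 * u) - c * sin (2 * u)) < 1.
Proof.
  intros Hc [Hu0 Hu1] Hctan.
  assert (Hsin : 0 < sin u) by (apply sin_gt_0; lra).
  assert (Hcos : 0 < cos u) by (apply cos_gt_0; lra).
  assert (Hpyth : sin u * sin u + cos u * cos u = 1)
    by (pose proof (sin2_cos2 u) as H; unfold Rsqr in H; exact H).
  assert (Hcsin : c * sin u < cos u).
  { unfold tan in Hctan.
    replace (c * sin u) with (c * (sin u / cos u) * cos u) by (field; lra).
    nra. }
  assert (Hcsin0 : 0 <= c * sin u) by nra.
  rewrite cos_2a_cos, sin_2a.
  apply Rabs_def1.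
  - assert (0 < sin u * sin u) by nra.
    assert (0 <= c * sin u * cos u) by nra.
    nra.
  - assert (0 < cos u * (cos u - c * sin u)) by (apply Rmult_lt_0_compat; lra).
    nra.
Qed.

Theorem theorem2 (alpha_star : R) (theta : R -> R) :
  0 < alpha_star ->
  (forall x : R, 0 < x -> 0 < theta x /\ theta x < 2 * atan (2 * x / alpha_star)) ->
  forall Lambda m dt : R,
    0 <= Lambda -> 0 < m -> 0 < dt ->
    dt ^ 2 * Lambda / m < alpha_star ->
    forall x : R, 0 < x -> Rabs (A_fun theta Lambda m dt x) < 1.
Proof.
  intros Ha Htheta Lambda m dt HLambda Hm Hdt Hstep x Hx.
  destruct (Htheta x Hx) as [Htheta0 Htheta1].
  set (u := theta x / 2).
  set (y := 2 * x / alpha_star).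
  set (c := dt ^ 2 * (Lambda / m) / (2 * x)).
  pose proof (atan_bound y) as Hatan.
  assert (Hc : 0 <= c).
  { unfold c, Rdiv. repeat apply Rmult_le_pos; try apply pow_le; try lra;
      left; apply Rinv_0_lt_compat; lra. }
  assert (Htan : 0 < tan u < y).
  { split; [apply tan_gt_0 | apply tan_lt_of_lt_atan]; unfold u, y in *; lra. }
  assert (Hcy : c * y < 1).
  { replace (c * y) with (dt ^ 2 * Lambda / m / alpha_star) by (unfold c, y; field; lra).
    apply (Rmult_lt_reg_r alpha_star); [exact Ha |].
    unfold Rdiv at 1; rewrite Rmult_assoc, Rinv_l by lra; lra. }
  replace (A_fun theta Lambda m dt x) with (cos (2 * u) - c * sin (2 * u))
    by (unfold A_fun, c, u; replace (2 * (theta x / 2)) with (theta x) by field; field; lra).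
  apply Rabs_cos_double_sub_mul_sin_double_lt_1; [exact Hc | unfold u, y in *; lra | nra].
Qed.
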